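(* Let $B\in M_2(\mathbb{Z})$ be an expanding matrix whose characteristic polynomial is $x^2-px+q$ with $p$ a positive integer and $q\in\{3,-3\}$. Let $k\in\mathbb{Z}\setminus\{0\}$ and let $v\in\mathbb{R}^2$ be such that $\{v,Bv\}$ is linearly independent. Let $\mathcal{D}=\{0,v,kBv\}$. Then $T(B,\mathcal{D})$ is connected if and only if $k=\pm1$.
   Context: A real square matrix is expanding if all its eigenvalues have modulus strictly larger than $1$. For an expanding matrix $A\in M_n(\mathbb{Z})$ and a finite set $\mathcal{D}\subset\mathbb{R}^n$ with $|\mathcal D|=|\det A|$, the self-affine set $T(A,\mathcal{D})$ is the unique nonempty compact set $T$ with $AT=T+\mathcal{D}$; equivalently $T=\{\sum_{i=1}^\infty A^{-i}d_{j_i}: d_{j_i}\in\mathcal{D}\}$. *)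

From Stdlib Require Import Reals Lra ZArith List.
Open Scope R_scope.

Definition vec := (R * R)%type.
Definition vzero : vec := (0, 0).
Definition vadd (u w : vec) : vec := (fst u + fst w, snd u + snd w).
Definition vscale (a : R) (u : vec) : vec := (a * fst u, a * snd u).

Definition mat := ((R * R) * (R * R))%type.
Definition m11 (M : mat) := fst (fst M).
Definition m12 (M : mat) := snd (fst M).
Definition m21 (M : mat) := fst (snd M).
Definition m22 (M : mat) := snd (snd M).
Definition mat_vec (M : mat) (u : vec) : vec :=
  (m11 M * fst u + m12 M * snd u, m21 M * fst u + m22 M * snd u).
Definition mat_det (M : mat) : R := m11 M * m22 M - m12 M * m21 M.
Definition mat_tr (M : mat) : R := m11 M + m22 M.
(* inverse of a 2x2 matrix (meaningful when det <> 0) *)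
Definition mat_inv (M : mat) : mat :=
  let d := mat_det M in
  ((m22 M / d, - m12 M / d), (- m21 M / d, m11 M / d)).
Fixpoint mat_pow_vec (M : mat) (n : nat) (u : vec) : vec :=
  match n with O => u | S n' => mat_vec M (mat_pow_vec M n' u) end.

Definition zmat := ((Z * Z) * (Z * Z))%type.
Definition zmat_R (B : zmat) : mat :=
  ((IZR (fst (fst B)), IZR (snd (fst B))), (IZR (fst (snd B)), IZR (snd (snd B)))).

(* Eigenvalues of a real 2x2 matrix M: complex numbers lam = x + i y with
   det(M - lam I) = (m11 - lam)(m22 - lam) - m12 m21 = 0, written out in
   real and imaginary parts. *)
Definition is_eigenvalue (M : mat) (x y : R) : Prop :=
  (m11 M - x) * (m22 M - x) - y * y - m12 M * m21 M = 0 /\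
  - y * (m22 M - x) - y * (m11 M - x) = 0.

Definition expanding (M : mat) : Prop :=
  forall x y : R, is_eigenvalue M x y -> x * x + y * y > 1.

(* Partial sums  sum_{i=1}^{N+1} A^{-i} dig_{i-1} *)
Fixpoint partial_sum (Ainv : mat) (dig : nat -> vec) (N : nat) : vec :=
  match N with
  | O => mat_pow_vec Ainv 1 (dig O)
  | S N' => vadd (partial_sum Ainv dig N') (mat_pow_vec Ainv (S N) (dig N))
  end.

Definition vec_cv (u : nat -> vec) (l : vec) : Prop :=
  Un_cv (fun n => fst (u n)) (fst l) /\ Un_cv (fun n => snd (u n)) (snd l).

Definition self_affine_set (A : mat) (D : list vec) (x : vec) : Prop :=
  exists dig : nat -> vec,
    (forall n, In (dig n) D) /\ vec_cv (partial_sum (mat_inv A) dig) x.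

Definition dist2 (u w : vec) : R :=
  sqrt ((fst u - fst w) ^ 2 + (snd u - snd w) ^ 2).
Definition open2 (U : vec -> Prop) : Prop :=
  forall x, U x -> exists eps, eps > 0 /\ forall y, dist2 x y < eps -> U y.
Definition connected2 (S : vec -> Prop) : Prop :=
  ~ exists U V : vec -> Prop,
      open2 U /\ open2 V /\
      (forall x, S x -> U x \/ V x) /\
      (exists x, S x /\ U x) /\ (exists x, S x /\ V x) /\
      (forall x, S x -> U x -> V x -> False).

Definition lin_indep2 (u w : vec) : Prop :=
  forall a b : R, vadd (vscale a u) (vscale b w) = vzero -> a = 0 /\ b = 0.

From Stdlib Require Import Reals ZArith List.
Import ListNotations.
Open Scope R_scope.
From Stdlib Require Import Lra Lia Classical ClassicalEpsilon.

(** The proof works with [Ai = B^-1] and the basis [(v, w)], [w = B v], on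
    which [Ai] acts as the inverse companion matrix (Cayley-Hamilton).
    - General theory: for a contraction with an adapted norm, digit
      expansions converge, [T = Union_d Ai (d + T)] and cylinders shrink.
    - Connectedness criterion: if the digits are linked by the relation
      "[d + T] meets [d' + T]", then [T] is connected.  Such touchings are
      certified by periodic orbits of differences (finite neighbour graphs).
    - Disconnectedness criterion: a line strictly separating the pieces
      [Ai (d + T)]; the pieces are located with an invariant polygon.
    - Expansiveness leaves [(p, q)] in {(1,3), (2,3), (3,3), (1,-3)}; in each
      case explicit certificates (an adapted parallelogram norm, neighbour
      graphs for [k = +-1], invariant polygons moving affinely with [k] and
      separating lines for [|k| >= 2]) are checked by linear arithmetic. *)

Definition vsub (u w : vec) : vec := (fst u - fst w, snd u - snd w).

Lemma vec_ext (u w : vec) : fst u = fst w -> snd u = snd w -> u = w.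
Proof. destruct u, w; simpl; intros; subst; reflexivity. Qed.

Ltac vec_ring :=
  apply vec_ext; unfold vadd, vsub, vscale, vzero, mat_vec; simpl; ring.

Lemma mat_vec_add M u w : mat_vec M (vadd u w) = vadd (mat_vec M u) (mat_vec M w).
Proof. vec_ring. Qed.

Lemma mat_vec_sub M u w : mat_vec M (vsub u w) = vsub (mat_vec M u) (mat_vec M w).
Proof. vec_ring. Qed.

Lemma pow_vec_add M n u w :
  mat_pow_vec M n (vadd u w) = vadd (mat_pow_vec M n u) (mat_pow_vec M n w).
Proof. induction n as [|n IH]; simpl; auto. rewrite IH, mat_vec_add; auto. Qed.

Lemma pow_vec_sub M n u w :
  mat_pow_vec M n (vsub u w) = vsub (mat_pow_vec M n u) (mat_pow_vec M n w).
Proof. induction n as [|n IH]; simpl; auto. rewrite IH, mat_vec_sub; auto. Qed.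

Lemma pow_vec_comp M n m u : mat_pow_vec M n (mat_pow_vec M m u) = mat_pow_vec M (n + m) u.
Proof. induction n as [|n IH]; simpl; auto. rewrite IH; auto. Qed.

Lemma pow_vec_comm M n u : mat_pow_vec M n (mat_vec M u) = mat_vec M (mat_pow_vec M n u).
Proof. induction n as [|n IH]; simpl; auto. rewrite IH; auto. Qed.

Definition linear_form (al be : R) (x : vec) : R := al * fst x + be * snd x.

Lemma vec_cv_unique u x y : vec_cv u x -> vec_cv u y -> x = y.
Proof. intros [H1 H2] [H3 H4]; apply vec_ext; eapply UL_sequence; eauto. Qed.

Lemma vec_cv_ext u w x : (forall n, u n = w n) -> vec_cv u x -> vec_cv w x.
Proof.
  intros E [H1 H2]; split; eapply Un_cv_ext; eauto; intros n; simpl; rewrite E; auto.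
Qed.

Lemma vec_cv_const (c : vec) : vec_cv (fun _ => c) c.
Proof.
  split; intros e He; exists 0%nat; intros;
    unfold Rdist; rewrite Rminus_diag, Rabs_R0; lra.
Qed.

Lemma vec_cv_add u w x y :
  vec_cv u x -> vec_cv w y -> vec_cv (fun n => vadd (u n) (w n)) (vadd x y).
Proof. intros [H1 H2] [H3 H4]; split; apply CV_plus; auto. Qed.

Lemma vec_cv_sub u w x y :
  vec_cv u x -> vec_cv w y -> vec_cv (fun n => vsub (u n) (w n)) (vsub x y).
Proof. intros [H1 H2] [H3 H4]; split; apply CV_minus; auto. Qed.

Lemma vec_cv_mat M u x : vec_cv u x -> vec_cv (fun n => mat_vec M (u n)) (mat_vec M x).
Proof.
  intros [H1 H2]; destruct (vec_cv_const (fst (fst M), snd (fst M))) as [C11 C12];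
    destruct (vec_cv_const (fst (snd M), snd (snd M))) as [C21 C22];
    split; apply CV_plus; apply CV_mult; auto.
Qed.

Lemma vec_cv_pow M n u x :
  vec_cv u x -> vec_cv (fun m => mat_pow_vec M n (u m)) (mat_pow_vec M n x).
Proof.
  intros H; induction n as [|n IH]; simpl; auto.
  apply (vec_cv_mat M _ _ IH).
Qed.

Lemma vec_cv_shift u x n : vec_cv (fun m => u (m + n)%nat) x -> vec_cv u x.
Proof. intros [H1 H2]; split; apply (CV_shift _ n); auto. Qed.

Lemma vec_cv_shift' u x n : vec_cv u x -> vec_cv (fun m => u (m + n)%nat) x.
Proof. intros [H1 H2]; split; apply (CV_shift' (fun m => _ (u m)) n); auto. Qed.

Lemma cv_le u l c : Un_cv u l -> (forall n, u n <= c) -> l <= c.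
Proof.
  intros H Hb. destruct (vec_cv_const (c, c)) as [Hc _].
  exact (Rle_cv_lim Hb H Hc).
Qed.

Lemma dist2_le_abs u w : dist2 u w <= Rabs (fst u - fst w) + Rabs (snd u - snd w).
Proof.
  unfold dist2. set (a := fst u - fst w). set (b := snd u - snd w).
  pose proof (Rabs_pos a); pose proof (Rabs_pos b).
  rewrite <- (sqrt_square (Rabs a + Rabs b)) by lra.
  apply sqrt_le_1_alt. rewrite <- (pow2_abs a), <- (pow2_abs b). nra.
Qed.

Lemma abs_fst_le_dist2 u w : Rabs (fst u - fst w) <= dist2 u w.
Proof.
  unfold dist2. rewrite <- sqrt_Rsqr_abs. apply sqrt_le_1_alt. unfold Rsqr.
  pose proof (pow2_ge_0 (snd u - snd w)). simpl. nra.
Qed.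

Lemma abs_snd_le_dist2 u w : Rabs (snd u - snd w) <= dist2 u w.
Proof.
  unfold dist2. rewrite <- sqrt_Rsqr_abs. apply sqrt_le_1_alt. unfold Rsqr.
  pose proof (pow2_ge_0 (fst u - fst w)). simpl. nra.
Qed.

Lemma half_plane_open al be c : open2 (fun x => linear_form al be x > c).
Proof.
  unfold linear_form. intros x Hx. set (S := Rabs al + Rabs be + 1).
  assert (HS : 0 < S) by (unfold S; pose proof (Rabs_pos al); pose proof (Rabs_pos be); lra).
  exists ((al * fst x + be * snd x - c) / S). split; [apply Rdiv_lt_0_compat; lra|].
  intros y Hy.
  assert (Hd : dist2 x y * S < al * fst x + be * snd x - c).
  { apply (Rmult_lt_compat_r S) in Hy; auto.
    replace ((al * fst x + be * snd x - c) / S * S) with (al * fst x + be * snd x - c)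
      in Hy by (field; lra). exact Hy. }
  pose proof (abs_fst_le_dist2 x y); pose proof (abs_snd_le_dist2 x y).
  assert (Rabs (al * (fst x - fst y)) <= Rabs al * dist2 x y)
    by (rewrite Rabs_mult; apply Rmult_le_compat_l; auto; apply Rabs_pos).
  assert (Rabs (be * (snd x - snd y)) <= Rabs be * dist2 x y)
    by (rewrite Rabs_mult; apply Rmult_le_compat_l; auto; apply Rabs_pos).
  pose proof (Rle_abs (al * (fst x - fst y))); pose proof (Rle_abs (be * (snd x - snd y))).
  assert (0 <= dist2 x y) by apply sqrt_pos.
  unfold S in Hd. nra.
Qed.

(** * Adapted norms *)

Record adapted_norm (Ai : mat) (N : vec -> R) (r K : R) : Prop := {
  an_ratio : 0 <= r < 1;
  an_add : forall x y, N (vadd x y) <= N x + N y;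
  an_scale : forall c x, N (vscale c x) = Rabs c * N x;
  an_contract : forall x, N (mat_vec Ai x) <= r * N x;
  an_fst : forall x, Rabs (fst x) <= K * N x;
  an_snd : forall x, Rabs (snd x) <= K * N x;
  an_closed : forall u x c, vec_cv u x -> (forall n, N (u n) <= c) -> N x <= c }.
Arguments an_ratio {Ai N r K}. Arguments an_add {Ai N r K}. Arguments an_scale {Ai N r K}.
Arguments an_contract {Ai N r K}. Arguments an_fst {Ai N r K}. Arguments an_snd {Ai N r K}.
Arguments an_closed {Ai N r K}.

Section Attractor.
Variables (Ai : mat) (N : vec -> R) (r K : R).
Hypothesis HN : adapted_norm Ai N r K.

Lemma ratio_nonneg : 0 <= r.
Proof. apply (an_ratio HN). Qed.

Lemma norm_zero : N vzero = 0.
Proof.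
  replace vzero with (vscale 0 vzero) by vec_ring.
  rewrite (an_scale HN), Rabs_R0; ring.
Qed.

Lemma norm_opp x : N (vscale (-1) x) = N x.
Proof.
  rewrite (an_scale HN). replace (Rabs (-1)) with 1 by (rewrite Rabs_left; lra). ring.
Qed.

Lemma norm_nonneg x : 0 <= N x.
Proof.
  pose proof (an_add HN x (vscale (-1) x)) as H.
  replace (vadd x (vscale (-1) x)) with vzero in H by vec_ring.
  rewrite norm_zero, norm_opp in H. lra.
Qed.

Lemma norm_sub x y : N (vsub x y) <= N x + N y.
Proof.
  replace (vsub x y) with (vadd x (vscale (-1) y)) by vec_ring.
  rewrite <- (norm_opp y). apply (an_add HN).
Qed.

Lemma comparison_nonneg : 0 <= K.
Proof.
  pose proof (an_fst HN (1, 0)) as H; simpl in H.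
  rewrite Rabs_R1 in H. pose proof (norm_nonneg (1, 0)). nra.
Qed.

Lemma norm_pow n x : N (mat_pow_vec Ai n x) <= r ^ n * N x.
Proof.
  pose proof ratio_nonneg.
  induction n as [|n IH]; simpl; [lra|].
  eapply Rle_trans; [apply (an_contract HN)|].
  rewrite Rmult_assoc. apply Rmult_le_compat_l; auto.
Qed.

Lemma dist2_le_norm x y : dist2 x y <= 2 * K * N (vsub x y).
Proof.
  eapply Rle_trans; [apply dist2_le_abs|].
  pose proof (an_fst HN (vsub x y)); pose proof (an_snd HN (vsub x y)).
  simpl in *. lra.
Qed.

Lemma ratio_pow_small C e : 0 < e -> exists n, r ^ n * C < e.
Proof.
  intros He. pose proof ratio_nonneg. pose proof (an_ratio HN).
  pose proof (Rabs_pos C).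
  destruct (pow_lt_1_zero r ltac:(rewrite Rabs_pos_eq; lra) (e / (Rabs C + 1)))
    as [n Hn]; [apply Rdiv_lt_0_compat; lra|].
  exists n. specialize (Hn n (le_n _)). rewrite Rabs_pos_eq in Hn by (apply pow_le; lra).
  assert (0 <= r ^ n) by (apply pow_le; lra).
  assert (r ^ n * (Rabs C + 1) < e).
  { apply (Rmult_lt_compat_r (Rabs C + 1)) in Hn; [|lra].
    replace (e / (Rabs C + 1) * (Rabs C + 1)) with e in Hn by (field; lra). exact Hn. }
  pose proof (Rle_abs C). nra.
Qed.

Lemma below_all_powers t C : (forall n, t <= r ^ n * C) -> t <= 0.
Proof.
  intros H. destruct (Rle_or_lt t 0) as [|Ht]; auto.
  destruct (ratio_pow_small C t Ht) as [n Hn]. specialize (H n). lra.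
Qed.

Lemma ratio_pow_antimono n m : (n <= m)%nat -> r ^ m <= r ^ n.
Proof.
  pose proof (an_ratio HN). induction 1 as [|m _ IH]; [lra|].
  simpl. assert (0 <= r ^ m) by (apply pow_le; lra). nra.
Qed.

Lemma norm_nonpos_zero x : N x <= 0 -> x = vzero.
Proof.
  intros H. pose proof (norm_nonneg x). pose proof comparison_nonneg.
  assert (Hx : N x = 0) by lra.
  pose proof (an_fst HN x); pose proof (an_snd HN x).
  rewrite Hx, Rmult_0_r in *.
  apply vec_ext; simpl; unfold Rabs in *;
    destruct (Rcase_abs (fst x)), (Rcase_abs (snd x)); lra.
Qed.

Notation psum := (partial_sum Ai).

(* The first [n] terms [sum_{i=1}^{n} Ai^i dig_{i-1}] of an expansion. *)
Definition head_sum (dig : nat -> vec) (n : nat) : vec :=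
  match n with O => vzero | S n' => psum dig n' end.

Lemma psum_ext d1 d2 m : (forall i, (i <= m)%nat -> d1 i = d2 i) -> psum d1 m = psum d2 m.
Proof.
  induction m as [|m IH]; intros H; simpl; rewrite H by lia; auto.
  rewrite IH by auto. auto.
Qed.

Lemma head_sum_ext d1 d2 n :
  (forall i, (i < n)%nat -> d1 i = d2 i) -> head_sum d1 n = head_sum d2 n.
Proof. destruct n; simpl; auto. intros H. apply psum_ext. intros; apply H; lia. Qed.

Lemma psum_split n m dig :
  psum dig (n + m) = vadd (head_sum dig n) (mat_pow_vec Ai n (psum (fun i => dig (n + i)%nat) m)).
Proof.
  induction m as [|m IH].
  - rewrite Nat.add_0_r. destruct n; simpl.
    + vec_ring.
    + rewrite Nat.add_0_r, pow_vec_comm. reflexivity.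
  - rewrite Nat.add_succ_r. simpl partial_sum. rewrite IH, pow_vec_add, !pow_vec_comm, pow_vec_comp.
    replace (n + S m)%nat with (S (n + m)) by lia. vec_ring.
Qed.

Lemma psum_sub a b m : psum (fun n => vsub (a n) (b n)) m = vsub (psum a m) (psum b m).
Proof.
  induction m as [|m IH]; simpl.
  - apply mat_vec_sub.
  - rewrite IH, pow_vec_sub, !mat_vec_sub. vec_ring.
Qed.

Definition digits (D : list vec) (s : nat -> vec) : Prop := forall n, In (s n) D.

Definition max_norm (D : list vec) : R := fold_right (fun d m => Rmax (N d) m) 0 D.

Lemma max_norm_nonneg D : 0 <= max_norm D.
Proof. induction D; simpl; [lra|]. eapply Rle_trans; [exact IHD|apply Rmax_r]. Qed.

Lemma max_norm_spec D d : In d D -> N d <= max_norm D.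
Proof.
  induction D as [|a D IH]; simpl; [tauto|]. intros [<-|Hd]; [apply Rmax_l|].
  eapply Rle_trans; [apply IH, Hd|apply Rmax_r].
Qed.

Section Digits.
Variable D : list vec.

Definition expansion_bound : R := max_norm D * r / (1 - r).

Lemma expansion_bound_nonneg : 0 <= expansion_bound.
Proof.
  pose proof (an_ratio HN). pose proof (max_norm_nonneg D).
  unfold expansion_bound. apply Rmult_le_pos; [nra|]. left; apply Rinv_0_lt_compat; lra.
Qed.

Lemma digits_shift s n : digits D s -> digits D (fun i => s (n + i)%nat).
Proof. intros H i; apply H. Qed.

Lemma psum_bound dig m : digits D dig -> N (psum dig m) <= expansion_bound.
Proof.
  intros Hdig. pose proof (an_ratio HN). pose proof expansion_bound_nonneg.
  set (M := max_norm D).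
  assert (HM : forall i, N (dig i) <= M) by (intros i; apply max_norm_spec, Hdig).
  assert (Hgeo : N (psum dig m) <= expansion_bound * (1 - r ^ (S m))).
  { induction m as [|m IH]; simpl.
    - eapply Rle_trans; [apply (an_contract HN)|]. unfold expansion_bound.
      replace (max_norm D * r / (1 - r) * (1 - r * 1)) with (r * M) by (unfold M; field; lra).
      apply Rmult_le_compat_l; auto; lra.
    - eapply Rle_trans; [apply (an_add HN)|].
      pose proof (norm_pow (S (S m)) (dig (S m))) as Hp; simpl in Hp.
      simpl in IH. pose proof (HM (S m)). assert (0 <= r ^ m) by (apply pow_le; lra).
      assert (r * (r * r ^ m) * N (dig (S m)) <= r * (r * r ^ m) * M)
        by (apply Rmult_le_compat_l; nra).
      replace (expansion_bound * (1 - r * (r * r ^ m)))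
        with (expansion_bound * (1 - r * r ^ m) + r * (r * r ^ m) * M)
        by (unfold expansion_bound, M; field; lra).
      lra. }
  assert (0 <= r ^ S m) by (apply pow_le; lra). nra.
Qed.

Lemma psum_tail dig n m : digits D dig -> (n <= m)%nat ->
  N (vsub (psum dig m) (psum dig n)) <= r ^ (S n) * expansion_bound.
Proof.
  intros Hdig Hnm. pose proof ratio_nonneg. pose proof expansion_bound_nonneg.
  destruct (Nat.eq_dec n m) as [<-|Hne].
  - replace (vsub (psum dig n) (psum dig n)) with vzero by vec_ring.
    rewrite norm_zero. apply Rmult_le_pos; auto. apply pow_le; auto.
  - replace m with (S n + (m - S n))%nat by lia. rewrite psum_split. simpl head_sum.
    replace (vsub (vadd (psum dig n) _) (psum dig n))
      with (mat_pow_vec Ai (S n) (psum (fun i => dig (S n + i)%nat) (m - S n))) by vec_ring.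
    eapply Rle_trans; [apply norm_pow|]. apply Rmult_le_compat_l; [apply pow_le; auto|].
    apply psum_bound, digits_shift, Hdig.
Qed.

Lemma psum_converges dig : digits D dig -> exists x, vec_cv (psum dig) x.
Proof.
  intros Hdig.
  assert (Hcauchy : forall f : vec -> R, (forall x, Rabs (f x) <= K * N x) ->
            (forall x y, f (vsub x y) = f x - f y) -> Cauchy_crit (fun n => f (psum dig n))).
  { intros f Hf Hsub e He. pose proof comparison_nonneg. pose proof expansion_bound_nonneg.
    destruct (ratio_pow_small (2 * K * expansion_bound * r) e He) as [n0 Hn0].
    exists n0. intros n m Hn Hm. unfold Rdist.
    replace (f (psum dig n) - f (psum dig m)) with
      (f (vsub (psum dig n) (psum dig n0)) - f (vsub (psum dig m) (psum dig n0)))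
      by (rewrite !Hsub; ring).
    pose proof (psum_tail dig n0 n Hdig Hn); pose proof (psum_tail dig n0 m Hdig Hm).
    pose proof (Hf (vsub (psum dig n) (psum dig n0))).
    pose proof (Hf (vsub (psum dig m) (psum dig n0))).
    assert (0 <= r ^ S n0) by (apply pow_le, ratio_nonneg).
    assert (K * N (vsub (psum dig n) (psum dig n0)) <= K * (r ^ S n0 * expansion_bound))
      by (apply Rmult_le_compat_l; auto).
    assert (K * N (vsub (psum dig m) (psum dig n0)) <= K * (r ^ S n0 * expansion_bound))
      by (apply Rmult_le_compat_l; auto).
    eapply Rle_lt_trans; [apply Rabs_triang|]. rewrite Rabs_Ropp. simpl in *. nra. }
  destruct (R_complete _ (Hcauchy fst (an_fst HN) ltac:(reflexivity))) as [l1 Hl1].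
  destruct (R_complete _ (Hcauchy snd (an_snd HN) ltac:(reflexivity))) as [l2 Hl2].
  exists (l1, l2). split; auto.
Qed.

Lemma limit_bound dig x : digits D dig -> vec_cv (psum dig) x -> N x <= expansion_bound.
Proof. intros Hd Hx. apply (an_closed HN _ _ _ Hx). intros; apply psum_bound; auto. Qed.

End Digits.

(* [attractor D] is the set [T] of all sums [sum_{i>=1} Ai^i d_{i-1}] with
   digits in [D]; for [Ai = A^-1] it is the self-affine set [T(A, D)]. *)
Definition attractor (D : list vec) (x : vec) : Prop :=
  exists s, digits D s /\ vec_cv (psum s) x.

Definition scons (d : vec) (s : nat -> vec) : nat -> vec :=
  fun i => match i with O => d | S j => s j end.
Definition graft (s : nat -> vec) (n : nat) (t : nat -> vec) : nat -> vec :=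
  fun i => if Nat.ltb i n then s i else t (i - n)%nat.
Definition upd (s : nat -> vec) (n : nat) (d : vec) : nat -> vec :=
  fun i => if Nat.eqb i n then d else s i.

Lemma limit_shift dig n e y : (forall i, dig (n + i)%nat = e i) -> vec_cv (psum e) y ->
  vec_cv (psum dig) (vadd (head_sum dig n) (mat_pow_vec Ai n y)).
Proof.
  intros He Hy. apply (vec_cv_shift _ _ n).
  apply (vec_cv_ext (fun m => vadd (head_sum dig n) (mat_pow_vec Ai n (psum e m)))).
  - intros m. replace (m + n)%nat with (n + m)%nat by lia.
    rewrite psum_split, (psum_ext (fun i => dig (n + i)%nat) e m); auto.
  - apply vec_cv_add; [apply vec_cv_const|apply vec_cv_pow; auto].
Qed.

Lemma limit_cons d e y : vec_cv (psum e) y -> vec_cv (psum (scons d e)) (mat_vec Ai (vadd d y)).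
Proof.
  intros Hy. pose proof (limit_shift (scons d e) 1 e y ltac:(reflexivity) Hy) as H.
  simpl in H. rewrite mat_vec_add. exact H.
Qed.

Lemma limit_graft s n t y : vec_cv (psum t) y ->
  vec_cv (psum (graft s n t)) (vadd (head_sum s n) (mat_pow_vec Ai n y)).
Proof.
  intros Hy. rewrite <- (head_sum_ext (graft s n t) s n).
  - apply (limit_shift _ n t); auto. intros i; unfold graft.
    replace (Nat.ltb (n + i) n) with false by (symmetry; apply Nat.ltb_ge; lia).
    f_equal; lia.
  - intros i Hi; unfold graft. replace (Nat.ltb i n) with true by (symmetry; apply Nat.ltb_lt; lia).
    auto.
Qed.

Section Cylinders.
Variable D : list vec.

Lemma attractor_cons d y : In d D -> attractor D y -> attractor D (mat_vec Ai (vadd d y)).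
Proof.
  intros Hd [s [Hs Hy]]. exists (scons d s). split; [intros [|i]; simpl; auto|].
  apply limit_cons; auto.
Qed.

Lemma attractor_decomp x : attractor D x ->
  exists d y, In d D /\ attractor D y /\ x = mat_vec Ai (vadd d y).
Proof.
  intros [s [Hs Hx]].
  destruct (psum_converges D (fun i => s (1 + i)%nat)) as [y Hy]; [apply digits_shift, Hs|].
  exists (s 0%nat), y. split; auto.
  split; [exists (fun i => s (1 + i)%nat); split; [apply digits_shift|]; auto|].
  pose proof (limit_shift s 1 _ y ltac:(reflexivity) Hy) as H.
  rewrite (vec_cv_unique _ _ _ Hx H). simpl. rewrite mat_vec_add. reflexivity.
Qed.

Definition agree (s t : nat -> vec) (n : nat) : Prop := forall i, (i < n)%nat -> s i = t i.

Definition in_cylinder (s : nat -> vec) (n : nat) (x : vec) : Prop :=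
  exists t, digits D t /\ agree s t n /\ vec_cv (psum t) x.

Lemma cylinder_attractor s n x : in_cylinder s n x -> attractor D x.
Proof. intros [t [Ht [_ Hx]]]; exists t; auto. Qed.

Lemma cylinder_agree s s' n x : agree s s' n -> in_cylinder s n x -> in_cylinder s' n x.
Proof.
  intros Hss' [t [Ht [Hst Hx]]]. exists t; split; [exact Ht|split; [|exact Hx]].
  intros i Hi. rewrite <- (Hss' i Hi). apply Hst, Hi.
Qed.

Lemma cylinder_child s n x : in_cylinder s n x ->
  exists d, In d D /\ in_cylinder (upd s n d) (S n) x.
Proof.
  intros [t [Ht [Hst Hx]]]. exists (t n). split; auto.
  exists t; split; [exact Ht|split; [|exact Hx]].
  intros i Hi. unfold upd. destruct (Nat.eqb_spec i n) as [->|]; auto. apply Hst; lia.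
Qed.

Lemma cylinder_image s n d y : digits D s -> In d D -> attractor D y ->
  in_cylinder (upd s n d) (S n) (vadd (head_sum s n) (mat_pow_vec Ai n (mat_vec Ai (vadd d y)))).
Proof.
  intros Hs Hd [e [He Hy]]. exists (graft s n (scons d e)). split; [|split].
  - intros i; unfold graft. destruct (Nat.ltb i n); auto. destruct (i - n)%nat; simpl; auto.
  - intros i Hi. unfold upd, graft. destruct (Nat.eqb_spec i n) as [->|Hne].
    + rewrite Nat.ltb_irrefl, Nat.sub_diag. reflexivity.
    + replace (Nat.ltb i n) with true by (symmetry; apply Nat.ltb_lt; lia). auto.
  - apply limit_graft, limit_cons; auto.
Qed.

Lemma cylinder_diam s n x y : in_cylinder s n x -> in_cylinder s n y ->
  N (vsub x y) <= r ^ n * (2 * expansion_bound D).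
Proof.
  intros [t [Ht [Hst Hx]]] [t' [Ht' [Hst' Hy]]].
  destruct (psum_converges D _ (digits_shift _ _ n Ht)) as [x' Hx'].
  destruct (psum_converges D _ (digits_shift _ _ n Ht')) as [y' Hy'].
  rewrite (vec_cv_unique _ _ _ Hx (limit_shift t n _ x' ltac:(reflexivity) Hx')).
  rewrite (vec_cv_unique _ _ _ Hy (limit_shift t' n _ y' ltac:(reflexivity) Hy')).
  rewrite (head_sum_ext t t' n) by (intros i Hi; rewrite <- Hst, <- Hst'; auto).
  replace (vsub _ _) with (mat_pow_vec Ai n (vsub x' y')) by (rewrite pow_vec_sub; vec_ring).
  eapply Rle_trans; [apply norm_pow|].
  apply Rmult_le_compat_l; [apply pow_le, ratio_nonneg|].
  eapply Rle_trans; [apply norm_sub|].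
  pose proof (limit_bound D _ x' (digits_shift _ _ n Ht) Hx').
  pose proof (limit_bound D _ y' (digits_shift _ _ n Ht') Hy'). lra.
Qed.

End Cylinders.

(** ** A connectedness criterion

    Given a separation [U, V] of [T], one builds
    a digit sequence all of whose cylinders meet both [U] and [V]; the
    limit point of the cylinders then lies in [U] or [V], and since these
    sets are open and the cylinders shrink, a nearby cylinder point lies in
    both, a contradiction. *)

Definition touch (D : list vec) (d d' : vec) : Prop :=
  exists x y, attractor D x /\ attractor D y /\ vadd d x = vadd d' y.

Lemma touch_sym D d d' : touch D d d' -> touch D d' d.
Proof. intros [x [y [Hx [Hy E]]]]. exists y, x. auto. Qed.

Definition touch_connected (D : list vec) : Prop :=
  forall C : vec -> Prop,
    (forall d d', In d D -> In d' D -> touch D d d' -> C d -> C d') ->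
    (exists d, In d D /\ C d) -> forall d, In d D -> C d.

Lemma touch_connected_three d0 d1 d2 :
  touch [d0; d1; d2] d0 d1 -> touch [d0; d1; d2] d0 d2 \/ touch [d0; d1; d2] d1 d2 ->
  touch_connected [d0; d1; d2].
Proof.
  intros T01 T2 C HC [d [Hd Cd]].
  assert (I0 : In d0 [d0; d1; d2]) by (simpl; auto).
  assert (I1 : In d1 [d0; d1; d2]) by (simpl; auto).
  assert (I2 : In d2 [d0; d1; d2]) by (simpl; auto).
  pose proof (HC _ _ I0 I1 T01); pose proof (HC _ _ I1 I0 (touch_sym _ _ _ T01)).
  assert ((C d0 <-> C d2) \/ (C d1 <-> C d2)).
  { destruct T2 as [T|T]; [left|right]; split; intros HCd;
      (eapply HC; [| |first [exact T|exact (touch_sym _ _ _ T)]|exact HCd]); simpl; auto. }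
  intros e He. simpl in Hd, He.
  destruct Hd as [<-|[<-|[<-|[]]]], He as [<-|[<-|[<-|[]]]]; tauto.
Qed.

Section Separation.
Variables (D : list vec) (U V : vec -> Prop).
Hypothesis Hcover : forall x, attractor D x -> U x \/ V x.

Definition mixed (s : nat -> vec) (n : nat) : Prop :=
  (exists x, in_cylinder D s n x /\ U x) /\ (exists x, in_cylinder D s n x /\ V x).

Lemma mixed_agree s s' n : agree s s' n -> mixed s n -> mixed s' n.
Proof.
  intros Hss' [[xu [Cu Uxu]] [xv [Cv Vxv]]].
  split; [exists xu|exists xv]; split; auto; eapply cylinder_agree; eauto.
Qed.

(* A mixed cylinder has a mixed child: otherwise "the child meets U" would
   propagate along touching digits to all children. *)
Lemma mixed_child s n : touch_connected D -> digits D s -> mixed s n ->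
  exists d, In d D /\ mixed (upd s n d) (S n).
Proof.
  intros Hconn Hs [[xu [Cu Uxu]] [xv [Cv Vxv]]]. apply NNPP; intros Hno.
  set (CU := fun d => exists x, in_cylinder D (upd s n d) (S n) x /\ U x).
  assert (HCU : forall d, In d D -> CU d).
  { apply Hconn.
    - intros a b Ha Hb [x [y [Hx [Hy Exy]]]] [xa [Ca Uxa]].
      pose proof (cylinder_image D s n a x Hs Ha Hx) as Za.
      pose proof (cylinder_image D s n b y Hs Hb Hy) as Zb.
      rewrite Exy in Za.
      destruct (Hcover _ (cylinder_attractor _ _ _ _ Zb)) as [Uz|Vz].
      + exists (vadd (head_sum s n) (mat_pow_vec Ai n (mat_vec Ai (vadd b y)))). auto.
      + exfalso. apply Hno. exists a. split; auto. split; eauto.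
    - destruct (cylinder_child D s n xu Cu) as [d [Hd Cd]]. exists d. split; auto.
      exists xu. auto. }
  destruct (cylinder_child D s n xv Cv) as [d [Hd Cd]].
  apply Hno. exists d. split; auto. split; [apply HCU, Hd|eauto].
Qed.

(* Choosing mixed children forever yields a digit sequence with all its
   cylinders mixed. *)
Lemma mixed_address : touch_connected D ->
  (exists x, attractor D x /\ U x) -> (exists x, attractor D x /\ V x) ->
  exists s, digits D s /\ forall n, mixed s n.
Proof.
  intros Hconn [xu [[tu [Htu Hxu]] Uxu]] [xv [[tv [Htv Hxv]] Vxv]].
  set (d0 := tu 0%nat).
  set (choice := fun s m =>
         epsilon (inhabits d0) (fun d => In d D /\ mixed (upd s m d) (S m))).
  set (approx := nat_rect (fun _ => nat -> vec) tu (fun m sm => upd sm m (choice sm m))).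
  assert (Happrox : forall n, digits D (approx n) /\ mixed (approx n) n).
  { induction n as [|n [Hd Hm]].
    - split; auto. split; [exists xu|exists xv]; split; auto.
      + exists tu; split; [|split]; auto. intros i Hi; lia.
      + exists tv; split; [|split]; auto. intros i Hi; lia.
    - destruct (epsilon_spec (inhabits d0) (fun d => In d D /\ mixed (upd (approx n) n d) (S n))
                  (mixed_child _ _ Hconn Hd Hm)) as [E1 E2].
      split; auto. intros i; simpl; unfold upd. destruct (Nat.eqb i n); auto. }
  assert (Hstable : forall n m i, (i < n)%nat -> approx (n + m)%nat i = approx n i).
  { intros n m i Hi; induction m as [|m IH]; [rewrite Nat.add_0_r; auto|].
    rewrite Nat.add_succ_r; simpl; unfold upd.
    replace (Nat.eqb i (n + m)) with false by (symmetry; apply Nat.eqb_neq; lia). auto. }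
  exists (fun i => approx (S i) i). split; [intros i; apply (proj1 (Happrox (S i)))|].
  intros n. apply (mixed_agree (approx n)); [|apply Happrox].
  intros i Hi. replace n with (S i + (n - S i))%nat by lia. apply Hstable; lia.
Qed.

Lemma shrinking_cylinders (P Q : vec -> Prop) s z : open2 P -> P z ->
  (forall n, in_cylinder D s n z) -> (forall n, exists x, in_cylinder D s n x /\ Q x) ->
  exists x, attractor D x /\ P x /\ Q x.
Proof.
  intros HP Pz Hz HQ. destruct (HP z Pz) as [e [He Hball]].
  destruct (ratio_pow_small (2 * K * (2 * expansion_bound D)) e He) as [n Hn].
  destruct (HQ n) as [x [Cx Qx]]. exists x. split; [eapply cylinder_attractor; eauto|].
  split; auto. apply Hball.
  pose proof (cylinder_diam D s n z x (Hz n) Cx). pose proof comparison_nonneg.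
  pose proof (dist2_le_norm z x). nra.
Qed.

End Separation.

Theorem attractor_connected D : touch_connected D -> connected2 (attractor D).
Proof.
  intros Hconn [U [V [HU [HV [Hcover [HTU [HTV Hdisj]]]]]]].
  destruct (mixed_address D U V Hcover Hconn HTU HTV) as [s [Hs Hmixed]].
  destruct (psum_converges D s Hs) as [z Hz].
  assert (Hzc : forall n, in_cylinder D s n z).
  { intros n; exists s; split; [exact Hs|split; [intros i _; reflexivity|exact Hz]]. }
  destruct (Hcover z (cylinder_attractor D s 0 z (Hzc 0%nat))) as [Uz|Vz].
  - destruct (shrinking_cylinders D U V s z HU Uz Hzc (fun n => proj2 (Hmixed n)))
      as [x [Tx [Ux Vx]]]. exact (Hdisj x Tx Ux Vx).
  - destruct (shrinking_cylinders D V U s z HV Vz Hzc (fun n => proj1 (Hmixed n)))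
      as [x [Tx [Vx Ux]]]. exact (Hdisj x Tx Ux Vx).
Qed.

(** ** A disconnectedness criterion *)

Theorem attractor_disconnected D al be c d_hi d_lo : In d_hi D -> In d_lo D ->
  (forall d, In d D ->
     (forall y, attractor D y -> linear_form al be (mat_vec Ai (vadd d y)) > c) \/
     (forall y, attractor D y -> linear_form al be (mat_vec Ai (vadd d y)) < c)) ->
  (forall y, attractor D y -> linear_form al be (mat_vec Ai (vadd d_hi y)) > c) ->
  (forall y, attractor D y -> linear_form al be (mat_vec Ai (vadd d_lo y)) < c) ->
  ~ connected2 (attractor D).
Proof.
  intros Hhi Hlo Hside Shi Slo Hconn.
  destruct (psum_converges D (fun _ => d_lo)) as [y0 Hy0]; [intros i; auto|].
  assert (Ty0 : attractor D y0) by (exists (fun _ => d_lo); split; auto; intros i; auto).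
  apply Hconn.
  exists (fun x => linear_form al be x > c), (fun x => linear_form (-al) (-be) x > -c).
  split; [apply half_plane_open|]. split; [apply half_plane_open|].
  split; [|split; [|split]].
  - intros x Hx. destruct (attractor_decomp D x Hx) as [d [y [Hd [Hy ->]]]].
    unfold linear_form in *.
    destruct (Hside d Hd) as [H|H]; specialize (H y Hy); [left|right]; lra.
  - exists (mat_vec Ai (vadd d_hi y0)). split; [apply attractor_cons; auto|apply Shi; auto].
  - exists (mat_vec Ai (vadd d_lo y0)). split; [apply attractor_cons; auto|].
    specialize (Slo y0 Ty0). unfold linear_form in *. lra.
  - intros x _ A B. unfold linear_form in A, B. lra.
Qed.

(** ** Touching points from orbits of differences

    If [gam n = Ai (a_n - b_n + gam (n+1))] for a bounded sequence [gam] and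
    digit sequences [a], [b], then unrolling gives
    [gam 0 = sum_i Ai^(i+1) (a_i - b_i)], a difference of two points of [T].
    Eventually periodic orbits of this kind are described by finite
    neighbour graphs and certify that two pieces of [T] touch. *)

Lemma difference_orbit D (gam a b : nat -> vec) C :
  (forall n, N (gam n) <= C) -> digits D a -> digits D b ->
  (forall n, gam n = mat_vec Ai (vadd (vsub (a n) (b n)) (gam (S n)))) ->
  exists x y, attractor D x /\ attractor D y /\ vsub x y = gam 0%nat.
Proof.
  intros Hbound Ha Hb Hgam.
  destruct (psum_converges D a Ha) as [x Hx]. destruct (psum_converges D b Hb) as [y Hy].
  exists x, y. split; [exists a; auto|]. split; [exists b; auto|].
  set (c := fun n => vsub (a n) (b n)).
  assert (Hunroll : forall m, gam 0%nat = vadd (psum c m) (mat_pow_vec Ai (S m) (gam (S m)))).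
  { induction m as [|m IH].
    - rewrite (Hgam 0%nat) at 1. simpl. rewrite mat_vec_add. reflexivity.
    - rewrite IH, (Hgam (S m)) at 1. rewrite pow_vec_comm, pow_vec_add, mat_vec_add.
      simpl. unfold c. vec_ring. }
  assert (Hc : vec_cv (psum c) (vsub x y)).
  { apply (vec_cv_ext (fun n => vsub (psum a n) (psum b n))); [|apply vec_cv_sub; auto].
    intros n. unfold c. rewrite psum_sub. reflexivity. }
  assert (Hsmall : forall n, N (vsub (vsub x y) (gam 0%nat)) <= r ^ n * C).
  { intros n. apply (an_closed HN (fun j => vsub (psum c (j + n)) (gam 0%nat))).
    - apply vec_cv_sub; [apply vec_cv_shift'; auto|apply vec_cv_const].
    - intros j. rewrite (Hunroll (j + n)%nat).
      replace (vsub _ _) with (vscale (-1) (mat_pow_vec Ai (S (j + n)) (gam (S (j + n)))))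
        by vec_ring.
      rewrite norm_opp. eapply Rle_trans; [apply norm_pow|].
      pose proof (ratio_pow_antimono n (S (j + n)) ltac:(lia)).
      pose proof (Hbound (S (j + n))). pose proof (norm_nonneg (gam (S (j + n)))).
      assert (0 <= r ^ S (j + n)) by (apply pow_le, ratio_nonneg). nra. }
  pose proof (norm_nonpos_zero _ (below_all_powers _ C Hsmall)) as E.
  pose proof (f_equal fst E) as E1; pose proof (f_equal snd E) as E2; simpl in E1, E2.
  apply vec_ext; simpl; lra.
Qed.

End Attractor.

Section Coordinates.
Variables v w : vec.

Definition basis_det : R := fst v * snd w - snd v * fst w.
Hypothesis Hbasis : basis_det <> 0.

Definition comb (a b : R) : vec := vadd (vscale a v) (vscale b w).
Definition coord1 (x : vec) : R := (fst x * snd w - snd x * fst w) / basis_det.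
Definition coord2 (x : vec) : R := (fst v * snd x - snd v * fst x) / basis_det.

Lemma comb_coords x : x = comb (coord1 x) (coord2 x).
Proof. unfold comb, coord1, coord2, basis_det in *; apply vec_ext; simpl; field; auto. Qed.

Lemma coord1_comb a b : coord1 (comb a b) = a.
Proof. unfold comb, coord1, basis_det in *; simpl; field; auto. Qed.

Lemma coord2_comb a b : coord2 (comb a b) = b.
Proof. unfold comb, coord2, basis_det in *; simpl; field; auto. Qed.

Lemma coord1_add x y : coord1 (vadd x y) = coord1 x + coord1 y.
Proof. unfold coord1; simpl; field; auto. Qed.

Lemma coord2_add x y : coord2 (vadd x y) = coord2 x + coord2 y.
Proof. unfold coord2; simpl; field; auto. Qed.

Lemma coord1_scale c x : coord1 (vscale c x) = c * coord1 x.
Proof. unfold coord1; simpl; field; auto. Qed.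

Lemma coord2_scale c x : coord2 (vscale c x) = c * coord2 x.
Proof. unfold coord2; simpl; field; auto. Qed.

Lemma coord_form l1 l2 : exists al be, forall x,
  l1 * coord1 x + l2 * coord2 x = linear_form al be x.
Proof.
  exists ((l1 * snd w - l2 * snd v) / basis_det), ((- l1 * fst w + l2 * fst v) / basis_det).
  intros x; unfold coord1, coord2, linear_form; field; auto.
Qed.

Lemma coord_half_plane_closed u x l1 l2 c : vec_cv u x ->
  (forall n, l1 * coord1 (u n) + l2 * coord2 (u n) <= c) -> l1 * coord1 x + l2 * coord2 x <= c.
Proof.
  intros [H1 H2] Hb. destruct (coord_form l1 l2) as [al [be Hl]].
  rewrite Hl. apply (cv_le (fun n => al * fst (u n) + be * snd (u n))).
  - apply CV_plus; apply CV_mult; auto; apply (vec_cv_const (al, be)).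
  - intros n. specialize (Hb n). rewrite Hl in Hb. exact Hb.
Qed.

(* [Ai] acts on coordinates like the inverse of the companion matrix of
   [x^2 - P x + Q]; this is the case for [Ai = B^-1] and [w = B v]. *)
Definition companion_action (Ai : mat) (P Q : R) : Prop :=
  forall a b, mat_vec Ai (comb a b) = comb (P * a / Q + b) (- a / Q).

Section Parallelogram.
Variables (Ai : mat) (P Q : R).
Hypothesis HAi : companion_action Ai P Q.
Variables l11 l12 l21 l22 r c : R.
Hypothesis Hr : 0 <= r < 1.
Hypothesis Hcontract : forall a b t,
  -t <= l11 * a + l12 * b <= t -> -t <= l21 * a + l22 * b <= t ->
  (- (r * t) <= l11 * (P * a / Q + b) + l12 * (- a / Q) <= r * t) /\
  (- (r * t) <= l21 * (P * a / Q + b) + l22 * (- a / Q) <= r * t).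
Hypothesis Hbounded : forall a b t,
  -t <= l11 * a + l12 * b <= t -> -t <= l21 * a + l22 * b <= t ->
  -(c * t) <= a <= c * t /\ -(c * t) <= b <= c * t.

Definition pgram_norm (x : vec) : R :=
  Rmax (Rabs (l11 * coord1 x + l12 * coord2 x)) (Rabs (l21 * coord1 x + l22 * coord2 x)).

Lemma pgram_norm_bounds x :
  -(pgram_norm x) <= l11 * coord1 x + l12 * coord2 x <= pgram_norm x /\
  -(pgram_norm x) <= l21 * coord1 x + l22 * coord2 x <= pgram_norm x.
Proof.
  unfold pgram_norm. set (u := l11 * _ + _). set (u' := l21 * _ + _).
  pose proof (Rmax_l (Rabs u) (Rabs u')); pose proof (Rmax_r (Rabs u) (Rabs u')).
  pose proof (Rle_abs u); pose proof (Rle_abs (- u)); pose proof (Rle_abs u');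
    pose proof (Rle_abs (- u')); rewrite Rabs_Ropp in *. lra.
Qed.

Lemma pgram_norm_coords x :
  Rabs (coord1 x) <= c * pgram_norm x /\ Rabs (coord2 x) <= c * pgram_norm x.
Proof.
  destruct (pgram_norm_bounds x) as [A1 A2]. destruct (Hbounded _ _ _ A1 A2) as [B1 B2].
  split; apply Rabs_le; lra.
Qed.

Lemma pgram_norm_nonneg x : 0 <= pgram_norm x.
Proof. unfold pgram_norm. eapply Rle_trans; [apply Rabs_pos|apply Rmax_l]. Qed.

Lemma pgram_norm_component (f : vec -> R) x :
  f x = coord1 x * f v + coord2 x * f w ->
  Rabs (f x) <= c * (Rabs (f v) + Rabs (f w)) * pgram_norm x.
Proof.
  intros Hf. rewrite Hf. destruct (pgram_norm_coords x) as [C1 C2].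
  eapply Rle_trans; [apply Rabs_triang|]. rewrite !Rabs_mult.
  pose proof (Rabs_pos (f v)); pose proof (Rabs_pos (f w)).
  pose proof (Rabs_pos (coord1 x)); pose proof (Rabs_pos (coord2 x)).
  pose proof (pgram_norm_nonneg x). nra.
Qed.

Definition pgram_constant : R := c * (Rabs (fst v) + Rabs (fst w) + Rabs (snd v) + Rabs (snd w)).

Lemma pgram_norm_adapted : adapted_norm Ai pgram_norm r pgram_constant.
Proof.
  assert (Hc0 : forall x, 0 <= c * pgram_norm x).
  { intros x. destruct (pgram_norm_coords x) as [C1 _].
    pose proof (Rabs_pos (coord1 x)). lra. }
  split; auto.
  - intros x y.
    destruct (pgram_norm_bounds x) as [A1 A2]; destruct (pgram_norm_bounds y) as [B1 B2].
    unfold pgram_norm at 1. rewrite !coord1_add, !coord2_add.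
    apply Rmax_lub; apply Rabs_le; lra.
  - intros s x. unfold pgram_norm.
    rewrite !coord1_scale, !coord2_scale, <- RmaxRmult by apply Rabs_pos.
    f_equal; rewrite <- Rabs_mult; f_equal; ring.
  - intros x. rewrite (comb_coords x), HAi. unfold pgram_norm at 1.
    rewrite coord1_comb, coord2_comb.
    destruct (pgram_norm_bounds x) as [A1 A2]. destruct (Hcontract _ _ _ A1 A2) as [B1 B2].
    rewrite <- (comb_coords x). apply Rmax_lub; apply Rabs_le; lra.
  - intros x. eapply Rle_trans; [apply (pgram_norm_component fst)|].
    + rewrite (comb_coords x) at 1. unfold comb; simpl. ring.
    + pose proof (Rabs_pos (fst v)); pose proof (Rabs_pos (fst w)); pose proof (Rabs_pos (snd v));
        pose proof (Rabs_pos (snd w)); pose proof (Hc0 x). unfold pgram_constant. nra.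
  - intros x. eapply Rle_trans; [apply (pgram_norm_component snd)|].
    + rewrite (comb_coords x) at 1. unfold comb; simpl. ring.
    + pose proof (Rabs_pos (fst v)); pose proof (Rabs_pos (fst w)); pose proof (Rabs_pos (snd v));
        pose proof (Rabs_pos (snd w)); pose proof (Hc0 x). unfold pgram_constant. nra.
  - intros u x b Hu Hb. unfold pgram_norm. apply Rmax_lub; apply Rabs_le; split;
      try (apply (coord_half_plane_closed u); auto; intros n;
           destruct (pgram_norm_bounds (u n)) as [A1 A2]; specialize (Hb n); lra).
    + cut (- l11 * coord1 x + - l12 * coord2 x <= b); [lra|].
      apply (coord_half_plane_closed u); auto; intros n.
      destruct (pgram_norm_bounds (u n)) as [A1 A2]; specialize (Hb n); lra.
    + cut (- l21 * coord1 x + - l22 * coord2 x <= b); [lra|].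
      apply (coord_half_plane_closed u); auto; intros n.
      destruct (pgram_norm_bounds (u n)) as [A1 A2]; specialize (Hb n); lra.
Qed.

End Parallelogram.
End Coordinates.

(* A state of a neighbour graph: the difference [comb v w a b] of two points
   of [T], the indices of the first digits of these two points, and the
   index of the next state.  Digit indices 0, 1, 2 stand for 0, v, kk w. *)
Record nbr_state := NbrState { ns_a : R; ns_b : R; ns_hi : nat; ns_lo : nat; ns_next : nat }.
Definition default_state : nbr_state := NbrState 0 0 0 0 0.

(* A polygon [{(a, b) | pa a + pb b <= al + be kk for each row}] in
   coordinates, whose sides move affinely with the parameter [kk]. *)
Definition polygon_row : Type := R * R * R * R.

Section ThreeDigits.
Variables (v w : vec) (Ai : mat) (P Q kk : R).
Hypothesis Hbasis : basis_det v w <> 0.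
Hypothesis HAi : companion_action v w Ai P Q.

Definition three_digits : list vec := [vzero; v; vscale kk w].

Definition digit (j : nat) : vec :=
  match j with O => vzero | S O => v | _ => vscale kk w end.
Definition digit_coords (j : nat) : R * R :=
  match j with O => (0, 0) | S O => (1, 0) | _ => (0, kk) end.

Lemma digit_comb j : digit j = comb v w (fst (digit_coords j)) (snd (digit_coords j)).
Proof. destruct j as [|[|j]]; unfold comb; vec_ring. Qed.

Lemma digit_in j : In (digit j) three_digits.
Proof. destruct j as [|[|j]]; simpl; auto. Qed.

Lemma three_digits_index d : In d three_digits -> exists j, d = digit j.
Proof.
  simpl; intros [<-|[<-|[<-|[]]]]; [exists 0%nat|exists 1%nat|exists 2%nat]; reflexivity.
Qed.

Definition coord_map (j : nat) (a b : R) : R * R :=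
  (P * (fst (digit_coords j) + a) / Q + (snd (digit_coords j) + b),
   - (fst (digit_coords j) + a) / Q).

Lemma digit_map_comb j a b :
  mat_vec Ai (vadd (digit j) (comb v w a b)) =
  comb v w (fst (coord_map j a b)) (snd (coord_map j a b)).
Proof.
  rewrite digit_comb. replace (vadd _ _) with
    (comb v w (fst (digit_coords j) + a) (snd (digit_coords j) + b)) by (unfold comb; vec_ring).
  apply HAi.
Qed.

(* [s] is the image of [s'] under one step of the difference recursion
   [gam = Ai (digit hi - digit lo + gam')], in coordinates. *)
Definition nbr_step (s s' : nbr_state) : Prop :=
  let a1 := fst (digit_coords (ns_hi s)) in let a2 := snd (digit_coords (ns_hi s)) in
  let b1 := fst (digit_coords (ns_lo s)) in let b2 := snd (digit_coords (ns_lo s)) in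
  ns_a s = P * (a1 - b1 + ns_a s') / Q + (a2 - b2 + ns_b s') /\
  ns_b s = - (a1 - b1 + ns_a s') / Q.

Fixpoint steps_closed (L0 l : list nbr_state) : Prop :=
  match l with
  | nil => True
  | s :: l' => (ns_next s < length L0)%nat /\ nbr_step s (nth (ns_next s) L0 default_state) /\
               steps_closed L0 l'
  end.

Definition nbr_graph (L : list nbr_state) : Prop := (0 < length L)%nat /\ steps_closed L L.

Lemma steps_closed_nth L0 l i : steps_closed L0 l -> (i < length l)%nat ->
  let s := nth i l default_state in
  (ns_next s < length L0)%nat /\ nbr_step s (nth (ns_next s) L0 default_state).
Proof.
  revert i; induction l as [|s l IH]; simpl; intros i H Hi; [lia|].
  destruct H as [H1 [H2 H3]]. destruct i; auto. apply IH; auto. lia.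
Qed.

Definition state_vec (s : nbr_state) : vec := comb v w (ns_a s) (ns_b s).

Section Norm.
Variables (N : vec -> R) (r K : R).
Hypothesis HN : adapted_norm Ai N r K.

(* Following a neighbour graph from its first state gives a bounded orbit
   of differences, hence two points of [T] whose difference is that state. *)
Lemma nbr_graph_touch L : nbr_graph L ->
  exists x y, attractor Ai three_digits x /\ attractor Ai three_digits y /\
              vsub x y = state_vec (nth 0 L default_state).
Proof.
  intros [Hlen HL].
  set (idx := fix idx n := match n with O => O | S m => ns_next (nth (idx m) L default_state) end).
  assert (Hidx : forall n, (idx n < length L)%nat).
  { induction n as [|n IH]; simpl; auto. apply (steps_closed_nth L L); auto. }
  set (st := fun n => nth (idx n) L default_state).
  destruct (difference_orbit Ai N r K HN three_digits (fun n => state_vec (st n))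
              (fun n => digit (ns_hi (st n))) (fun n => digit (ns_lo (st n)))
              (max_norm N (map state_vec L))) as [x [y [Hx [Hy Hxy]]]].
  - intros n. apply max_norm_spec. apply in_map, nth_In, Hidx.
  - intros n; apply digit_in.
  - intros n; apply digit_in.
  - intros n. destruct (steps_closed_nth L L (idx n) HL (Hidx n)) as [_ [E1 E2]].
    unfold state_vec. change (st (S n)) with (nth (ns_next (st n)) L default_state).
    rewrite !digit_comb. fold (st n) in E1, E2 |- *.
    replace (vadd _ _) with
      (comb v w (fst (digit_coords (ns_hi (st n))) - fst (digit_coords (ns_lo (st n)))
                 + ns_a (nth (ns_next (st n)) L default_state))
                (snd (digit_coords (ns_hi (st n))) - snd (digit_coords (ns_lo (st n)))
                 + ns_b (nth (ns_next (st n)) L default_state))) by (unfold comb; vec_ring).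
    rewrite HAi, E1, E2. reflexivity.
  - exists x, y. auto.
Qed.

Theorem three_digits_connected L1 L2 : nbr_graph L1 -> nbr_graph L2 ->
  state_vec (nth 0 L1 default_state) = v ->
  state_vec (nth 0 L2 default_state) = vscale kk w \/
  state_vec (nth 0 L2 default_state) = vsub (vscale kk w) v ->
  connected2 (attractor Ai three_digits).
Proof.
  intros G1 G2 E1 E2. apply (attractor_connected Ai N r K HN).
  apply touch_connected_three.
  - destruct (nbr_graph_touch L1 G1) as [x [y [Hx [Hy Hxy]]]].
    exists x, y; repeat split; auto. rewrite E1 in Hxy.
    pose proof (f_equal fst Hxy); pose proof (f_equal snd Hxy).
    apply vec_ext; unfold vadd, vsub, vzero in *; simpl in *; lra.
  - destruct (nbr_graph_touch L2 G2) as [x [y [Hx [Hy Hxy]]]].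
    destruct E2 as [E2|E2]; rewrite E2 in Hxy; [left|right]; exists x, y; repeat split; auto;
      pose proof (f_equal fst Hxy); pose proof (f_equal snd Hxy);
      apply vec_ext; unfold vadd, vsub, vscale, vzero in *; simpl in *; lra.
Qed.

Definition in_polygon (rows : list polygon_row) (a b : R) : Prop :=
  fold_right (fun row acc => let '(pa, pb, al, be) := row in pa * a + pb * b <= al + be * kk /\ acc)
    True rows.

Lemma in_polygon_closed rows u x : vec_cv u x ->
  (forall n, in_polygon rows (coord1 v w (u n)) (coord2 v w (u n))) ->
  in_polygon rows (coord1 v w x) (coord2 v w x).
Proof.
  intros Hu. induction rows as [|[[[pa pb] al] be] rows IH]; simpl; auto.
  intros H. split.
  - apply (coord_half_plane_closed v w Hbasis u); auto. intros n; apply (H n).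
  - apply IH. intros n; apply (H n).
Qed.

(* A polygon containing the origin and invariant under the three first-level
   maps contains [T] (in coordinates). *)
Theorem three_digits_disconnected rows (phia phib c : R) :
  in_polygon rows 0 0 ->
  (forall j a b, in_polygon rows a b ->
     in_polygon rows (fst (coord_map j a b)) (snd (coord_map j a b))) ->
  (forall a b, in_polygon rows a b ->
     phia * fst (coord_map 2 a b) + phib * snd (coord_map 2 a b) > c) ->
  (forall j a b, (j < 2)%nat -> in_polygon rows a b ->
     phia * fst (coord_map j a b) + phib * snd (coord_map j a b) < c) ->
  ~ connected2 (attractor Ai three_digits).
Proof.
  intros H0 Hinv Hhi Hlo.
  set (inside := fun y => in_polygon rows (coord1 v w y) (coord2 v w y)).
  assert (Hstep : forall j y, inside y -> inside (mat_vec Ai (vadd (digit j) y))).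
  { intros j y Hy. unfold inside.
    rewrite (comb_coords v w Hbasis y), digit_map_comb, coord1_comb, coord2_comb by auto.
    apply Hinv, Hy. }
  assert (Hpsum : forall n dig, digits three_digits dig -> inside (partial_sum Ai dig n)).
  { induction n as [|n IH]; intros dig Hd; destruct (three_digits_index _ (Hd 0%nat)) as [j Ej].
    - replace (partial_sum Ai dig 0) with (mat_vec Ai (vadd (digit j) (comb v w 0 0)))
        by (simpl; rewrite <- Ej; f_equal; unfold comb; vec_ring).
      apply Hstep. unfold inside. rewrite coord1_comb, coord2_comb by auto. exact H0.
    - replace (partial_sum Ai dig (S n))
        with (mat_vec Ai (vadd (digit j) (partial_sum Ai (fun i => dig (1 + i)%nat) n))).
      + apply Hstep, IH. apply digits_shift, Hd.
      + rewrite <- Ej, mat_vec_add. change (S n) with (1 + n)%nat.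
        rewrite (psum_split Ai 1 n dig). reflexivity. }
  assert (HT : forall y, attractor Ai three_digits y -> inside y).
  { intros y [dig [Hd Hy]]. apply (in_polygon_closed rows (partial_sum Ai dig)); auto.
    intros n; apply Hpsum, Hd. }
  assert (Hside : forall j y, attractor Ai three_digits y ->
            phia * coord1 v w (mat_vec Ai (vadd (digit j) y)) +
            phib * coord2 v w (mat_vec Ai (vadd (digit j) y)) =
            phia * fst (coord_map j (coord1 v w y) (coord2 v w y)) +
            phib * snd (coord_map j (coord1 v w y) (coord2 v w y))).
  { intros j y _. rewrite (comb_coords v w Hbasis y) at 1 2.
    rewrite digit_map_comb, coord1_comb, coord2_comb by auto. reflexivity. }
  destruct (coord_form v w Hbasis phia phib) as [al [be Hform]].
  apply (attractor_disconnected Ai N r K HN three_digits al be c (digit 2) (digit 0));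
    try apply digit_in.
  - intros d Hd. destruct (three_digits_index d Hd) as [j ->].
    destruct j as [|[|j]]; [right|right|left]; intros y Hy; rewrite <- Hform, Hside by auto.
    + apply Hlo; [lia|apply HT, Hy].
    + apply Hlo; [lia|apply HT, Hy].
    + apply Hhi, HT, Hy.
  - intros y Hy. rewrite <- Hform, Hside by auto. apply Hhi, HT, Hy.
  - intros y Hy. rewrite <- Hform, Hside by auto. apply Hlo; [lia|apply HT, Hy].
Qed.

End Norm.
End ThreeDigits.

(* Cayley-Hamilton: [A^-1 = (P I - A) / Q], so on the basis [(v, A v)] the
   inverse acts as the inverse companion matrix. *)
Lemma inverse_companion (A : mat) v P Q : mat_tr A = P -> mat_det A = Q -> Q <> 0 ->
  companion_action v (mat_vec A v) (mat_inv A) P Q.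
Proof.
  intros HP HQ Hq a b. subst P Q. destruct A as [[x11 x12] [x21 x22]], v as [v1 v2].
  cbv [comb mat_vec vadd vscale mat_inv mat_det mat_tr m11 m12 m21 m22 fst snd] in *.
  apply vec_ext; simpl; field; auto.
Qed.

Lemma basis_det_nonzero v w : lin_indep2 v w -> basis_det v w <> 0.
Proof.
  intros H HD. unfold basis_det in HD.
  destruct (H (snd w) (- snd v)) as [E1 E2]; [apply vec_ext; simpl; lra|].
  destruct (H (fst w) (- fst v)) as [E3 E4]; [apply vec_ext; simpl; nra|].
  destruct (H 1 0) as [E5 _]; [|lra].
  apply vec_ext; simpl; [replace (fst v) with 0 by lra|replace (snd v) with 0 by lra]; ring.
Qed.

(* An expanding matrix with characteristic polynomial [x^2 - p x + q],
   [p > 0], [q = +-3], has [(p, q)] among four possibilities: otherwise it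
   has a real eigenvalue in [[-1, 1]]. *)
Lemma expanding_trace_det (A : mat) (p q : Z) : expanding A ->
  mat_tr A = IZR p -> mat_det A = IZR q -> (0 < p)%Z -> (q = 3%Z \/ q = (-3)%Z) ->
  (p = 1 /\ q = 3 \/ p = 2 /\ q = 3 \/ p = 3 /\ q = 3 \/ p = 1 /\ q = -3)%Z.
Proof.
  intros Hexp Htr Hdet Hp Hq.
  assert (Heig : forall x, x * x - IZR p * x + IZR q = 0 -> is_eigenvalue A x 0).
  { intros x Hx. unfold is_eigenvalue. rewrite <- Htr, <- Hdet in Hx.
    unfold mat_tr, mat_det in Hx. split; nra. }
  assert (HP : 1 <= IZR p) by (apply IZR_le; lia).
  set (Pr := IZR p) in *.
  destruct Hq as [Hq|Hq]; subst q.
  - destruct (Z_le_gt_dec p 3) as [Hle|Hgt]; [lia|exfalso].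
    assert (HP4 : 4 <= Pr) by (apply IZR_le; lia).
    set (s := sqrt (Pr * Pr - 12)).
    assert (Hs : s * s = Pr * Pr - 12) by (apply sqrt_sqrt; nra).
    assert (0 <= s) by apply sqrt_pos.
    specialize (Hexp ((Pr - s) / 2) 0 (Heig ((Pr - s) / 2) ltac:(nra))).
    assert (s <= Pr) by nra. assert (Pr - 2 <= s) by nra. nra.
  - destruct (Z_le_gt_dec p 1) as [Hle|Hgt]; [lia|exfalso].
    assert (HP2 : 2 <= Pr) by (apply IZR_le; lia).
    set (s := sqrt (Pr * Pr + 12)).
    assert (Hs : s * s = Pr * Pr + 12) by (apply sqrt_sqrt; nra).
    assert (0 <= s) by apply sqrt_pos.
    specialize (Hexp ((Pr - s) / 2) 0 (Heig ((Pr - s) / 2) ltac:(nra))).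
    assert (Pr <= s) by nra. assert (s <= Pr + 2) by nra. nra.
Qed.

Lemma connected_iff_unit (conn : R -> Prop) :
  conn 1 -> conn (-1) -> (forall kk, kk >= 2 -> ~ conn kk) -> (forall kk, kk <= -2 -> ~ conn kk) ->
  forall k : Z, k <> 0%Z -> (conn (IZR k) <-> k = 1%Z \/ k = (-1)%Z).
Proof.
  intros C1 Cm1 Dp Dm k Hk. split.
  - intros Hc. destruct (Z_le_gt_dec k (-2)) as [Hle|Hgt];
      [exfalso; apply (Dm (IZR k)); auto; apply IZR_le; auto|].
    destruct (Z_le_gt_dec 2 k) as [Hle'|Hgt'];
      [exfalso; apply (Dp (IZR k)); auto; apply Rle_ge, IZR_le; auto|lia].
  - intros [-> | ->]; auto.
Qed.

Ltac check_contraction := intros; repeat split; lra.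
Ltac check_graph := split; [simpl; lia|]; simpl; unfold nbr_step; simpl; repeat split; try lia; lra.
Ltac check_start := unfold state_vec, comb; first [vec_ring | left; vec_ring | right; vec_ring].
Ltac check_polygon :=
  unfold in_polygon, coord_map; simpl; intros;
  repeat match goal with H : _ /\ _ |- _ => destruct H end;
  try (match goal with j : nat |- _ => destruct j as [|[|?]] end);
  simpl; try lia; repeat split; lra.

Definition classification (Ai : mat) (v w : vec) : Prop :=
  forall k : Z, k <> 0%Z ->
    (connected2 (attractor Ai (three_digits v w (IZR k))) <-> k = 1%Z \/ k = (-1)%Z).

Lemma classification_p1_q3 Ai v w : basis_det v w <> 0 -> companion_action v w Ai 1 3 ->
  classification Ai v w.
Proof.
  intros Hbasis HAi.
  pose proof (pgram_norm_adapted v w Hbasis Ai 1 3 HAi (-3) (-4) (-2) 4 (9/10) 1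
    ltac:(lra) ltac:(check_contraction) ltac:(check_contraction)) as HN.
  refine (connected_iff_unit (fun kk => connected2 (attractor Ai (three_digits v w kk))) _ _ _ _).
  - apply (three_digits_connected v w Ai 1 3 1 HAi _ _ _ HN
      [NbrState 1 0 2 1 0]
      [NbrState 0 1 2 1 1; NbrState (-2) 0 0 2 2; NbrState 0 (-1) 1 2 3; NbrState 2 0 2 0 0]);
    [check_graph|check_graph|check_start|check_start].
  - apply (three_digits_connected v w Ai 1 3 (-1) HAi _ _ _ HN
      [NbrState 1 0 0 2 1; NbrState 0 0 0 0 1]
      [NbrState 0 (-1) 1 0 1; NbrState 2 (-1) 1 2 2; NbrState 2 0 1 2 3;
       NbrState (-1) 1 0 1 4; NbrState (-2) 0 2 0 0]);
    [check_graph|check_graph|check_start|check_start].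
  - intros kk Hk. apply (three_digits_disconnected v w Ai 1 3 kk Hbasis HAi _ _ _ HN
      [(1, 0, 65397/1000000, 292491/200000);
       (104/125, 277/500, 60769/1000000, 1058197/1000000);
       (73/125, 203/250, 1483/25000, 694441/1000000);
       (46/125, 93/100, 59859/1000000, 11957/25000);
       (41/250, 493/500, 33013/500000, 292761/1000000);
       (-31/500, 499/500, 45267/500000, 41537/250000);
       (-9/25, 933/1000, 130619/1000000, 229549/1000000);
       (-19/25, 13/20, 181309/1000000, 88723/250000);
       (-1, 0, 242583/1000000, 7174/15625);
       (-104/125, -277/500, 120441/500000, 409641/1000000);
       (-73/125, -203/250, 199131/1000000, 15257/40000);
       (-46/125, -93/100, 204613/1000000, 421643/1000000);
       (-41/250, -493/500, 184/625, 459623/1000000);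
       (31/500, -499/500, 127209/500000, 281897/500000);
       (9/25, -933/1000, 1079/31250, 56521/62500);
       (19/25, -13/20, 53731/1000000, 1335887/1000000)]
      (649/1000) (19/25) (84991/250000 + 19687/100000 * (kk - 2))); check_polygon.
  - intros kk Hk. apply (three_digits_disconnected v w Ai 1 3 kk Hbasis HAi _ _ _ HN
      [(1, 0, 406909/1000000, -118993/250000);
       (747/1000, 133/200, 45341/500000, -423243/1000000);
       (437/1000, 899/1000, 31589/500000, -8441/20000);
       (41/250, 493/500, 17981/250000, -235717/500000);
       (-151/1000, 989/1000, 99511/1000000, -340569/500000);
       (-31/50, 98/125, 187187/1000000, -610989/500000);
       (-1, 0, 224587/1000000, -1479291/1000000);
       (-747/1000, -133/200, 227981/1000000, -118651/125000);
       (-437/1000, -899/1000, 242259/1000000, -8724/15625);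
       (-41/250, -493/500, 683/4000, -76143/250000);
       (151/1000, -989/1000, 122157/250000, -197221/1000000);
       (31/50, -98/125, 66437/125000, -42051/125000)]
      (-179/200) (-223/500) (19733/25000 + -93043/250000 * (kk + 2))); check_polygon.
Qed.

Lemma classification_p2_q3 Ai v w : basis_det v w <> 0 -> companion_action v w Ai 2 3 ->
  classification Ai v w.
Proof.
  intros Hbasis HAi.
  pose proof (pgram_norm_adapted v w Hbasis Ai 2 3 HAi (-2) (-3) (-1) 2 (9/10) 1
    ltac:(lra) ltac:(check_contraction) ltac:(check_contraction)) as HN.
  refine (connected_iff_unit (fun kk => connected2 (attractor Ai (three_digits v w kk))) _ _ _ _).
  - apply (three_digits_connected v w Ai 2 3 1 HAi _ _ _ HN
      [NbrState 1 0 2 1 0]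
      [NbrState 0 1 2 1 1; NbrState (-2) 1 0 1 2; NbrState (-2) 0 0 2 3;
       NbrState 0 (-1) 1 2 4; NbrState 2 (-1) 1 0 5; NbrState 2 0 2 0 0]);
    [check_graph|check_graph|check_start|check_start].
  - apply (three_digits_connected v w Ai 2 3 (-1) HAi _ _ _ HN
      [NbrState 1 0 0 2 1; NbrState 0 0 0 0 1]
      [NbrState 0 (-1) 2 0 1; NbrState 3 (-1) 1 2 2; NbrState 2 0 1 2 3;
       NbrState (-1) 1 0 1 4; NbrState (-2) 1 2 1 4]);
    [check_graph|check_graph|check_start|check_start].
  - intros kk Hk. apply (three_digits_disconnected v w Ai 2 3 kk Hbasis HAi _ _ _ HN
      [(1, 0, 28561/1000000, 929231/500000);
       (151/200, 82/125, 2171/100000, 111311/100000);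
       (259/500, 171/200, 5949/250000, 317531/500000);
       (79/250, 949/1000, 5459/200000, 39277/100000);
       (61/1000, 499/500, 24971/500000, 169953/1000000);
       (-87/200, 9/10, 44761/500000, 29451/125000);
       (-1, 0, 166181/1000000, 17549/50000);
       (-151/200, -82/125, 111939/1000000, 153123/500000);
       (-259/500, -171/200, 14081/100000, 285967/1000000);
       (-79/250, -949/1000, 27373/200000, 49457/125000);
       (-61/1000, -499/500, 75539/250000, 581993/1000000);
       (87/200, -9/10, 17033/1000000, 1345867/1000000)]
      (97/200) (7/8) (60717/250000 + 4497/31250 * (kk - 2))); check_polygon.
  - intros kk Hk. apply (three_digits_disconnected v w Ai 2 3 kk Hbasis HAi _ _ _ HN
      [(1, 0, 825557/1000000, -363501/1000000);
       (827/1000, 281/500, 411763/1000000, -78439/250000);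
       (627/1000, 779/1000, 6049/31250, -18181/62500);
       (467/1000, 221/250, 53893/1000000, -154677/500000);
       (79/250, 949/1000, 22947/500000, -97511/250000);
       (137/1000, 991/1000, 31517/500000, -528761/1000000);
       (-137/1000, 991/1000, 52267/500000, -108031/125000);
       (-627/1000, 779/1000, 185497/1000000, -50691/31250);
       (-1, 0, 116901/500000, -935491/500000);
       (-827/1000, -281/500, 107809/500000, -1276629/1000000);
       (-627/1000, -779/1000, 180201/1000000, -842687/1000000);
       (-467/1000, -221/250, 103409/500000, -283461/500000);
       (-79/250, -949/1000, 137791/500000, -193579/500000);
       (-137/1000, -991/1000, 11087/40000, -9393/40000);
       (137/1000, -991/1000, 17681/25000, -78631/500000);
       (627/1000, -779/1000, 963917/1000000, -283521/1000000)]
      (-537/1000) (-843/1000) (440091/1000000 + -5967/31250 * (kk + 2))); check_polygon.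
Qed.

Lemma classification_p3_q3 Ai v w : basis_det v w <> 0 -> companion_action v w Ai 3 3 ->
  classification Ai v w.
Proof.
  intros Hbasis HAi.
  pose proof (pgram_norm_adapted v w Hbasis Ai 3 3 HAi (-3) (-4) 0 (-3) (9/10) 1
    ltac:(lra) ltac:(check_contraction) ltac:(check_contraction)) as HN.
  refine (connected_iff_unit (fun kk => connected2 (attractor Ai (three_digits v w kk))) _ _ _ _).
  - apply (three_digits_connected v w Ai 3 3 1 HAi _ _ _ HN
      [NbrState 1 0 2 1 0]
      [NbrState (-1) 1 2 0 1; NbrState (-3) 1 0 2 1]);
    [check_graph|check_graph|check_start|check_start].
  - apply (three_digits_connected v w Ai 3 3 (-1) HAi _ _ _ HN
      [NbrState 1 0 0 2 1; NbrState 0 0 0 0 1]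
      [NbrState 0 (-1) 2 1 1; NbrState 4 (-2) 1 0 2; NbrState 5 (-2) 1 2 2]);
    [check_graph|check_graph|check_start|check_start].
  - intros kk Hk. apply (three_digits_disconnected v w Ai 3 3 kk Hbasis HAi _ _ _ HN
      [(1, 0, 293/200000, 196911/62500);
       (707/1000, 707/1000, 1031/1000000, 23584/15625);
       (111/200, 104/125, 603/500000, 468147/500000);
       (447/1000, 447/500, 967/500000, 60597/100000);
       (79/250, 949/1000, 511/125000, 330441/1000000);
       (0, 1, 401/31250, 2523/62500);
       (-1, 0, 1197/31250, 60251/500000);
       (-707/1000, -707/1000, 13473/500000, 84771/1000000);
       (-111/200, -104/125, 6303/200000, 19829/200000);
       (-447/1000, -447/500, 25271/500000, 39751/250000);
       (-79/250, -949/1000, 106881/1000000, 336243/1000000);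
       (0, -1, 335491/1000000, 1055443/1000000)]
      (223/500) (179/200) (3921/8000 + 220359/1000000 * (kk - 2))); check_polygon.
  - intros kk Hk. apply (three_digits_disconnected v w Ai 3 3 kk Hbasis HAi _ _ _ HN
      [(1, 0, 2134897/1000000, -60251/500000);
       (707/1000, 707/1000, 794863/1000000, -84771/1000000);
       (111/200, 104/125, 47079/125000, -19829/200000);
       (447/1000, 447/500, 155949/1000000, -39751/250000);
       (79/250, 949/1000, 799/62500, -336243/1000000);
       (0, 1, 40127/1000000, -1055443/1000000);
       (-1, 0, 59891/500000, -196911/62500);
       (-707/1000, -707/1000, 16853/200000, -23584/15625);
       (-111/200, -104/125, 98553/1000000, -468147/500000);
       (-447/1000, -447/500, 79027/500000, -60597/100000);
       (-79/250, -949/1000, 66847/200000, -330441/1000000);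
       (0, -1, 1050191/1000000, -2523/62500)]
      (-223/500) (-179/200) (32319/62500 + -220359/1000000 * (kk + 2))); check_polygon.
Qed.

Lemma classification_p1_qm3 Ai v w : basis_det v w <> 0 -> companion_action v w Ai 1 (-3) ->
  classification Ai v w.
Proof.
  intros Hbasis HAi.
  pose proof (pgram_norm_adapted v w Hbasis Ai 1 (-3) HAi (-3) (-4) (-3) 4 (9/10) 1
    ltac:(lra) ltac:(check_contraction) ltac:(check_contraction)) as HN.
  refine (connected_iff_unit (fun kk => connected2 (attractor Ai (three_digits v w kk))) _ _ _ _).
  - apply (three_digits_connected v w Ai 1 (-3) 1 HAi _ _ _ HN
      [NbrState 1 0 2 1 0]
      [NbrState (-1) 1 2 0 1; NbrState 3 (-1) 2 0 2; NbrState (-3) 1 0 2 1]);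
    [check_graph|check_graph|check_start|check_start].
  - apply (three_digits_connected v w Ai 1 (-3) (-1) HAi _ _ _ HN
      [NbrState 1 0 0 2 1; NbrState 0 0 0 0 1]
      [NbrState 0 (-1) 2 1 1; NbrState (-2) 0 2 0 0]);
    [check_graph|check_graph|check_start|check_start].
  - intros kk Hk. apply (three_digits_disconnected v w Ai 1 (-3) kk Hbasis HAi _ _ _ HN
      [(199/500, 917/1000, 501/1000000, 355159/500000);
       (901/1000, 217/500, 386889/500000, 105197/62500);
       (231/250, -383/1000, 1077051/1000000, 125691/62500);
       (609/1000, -793/1000, 894957/1000000, 1511477/1000000);
       (311/1000, -19/20, 321821/500000, 119927/125000);
       (3/500, -1, 348527/1000000, 3563/10000);
       (-199/500, -917/1000, 81/200000, 51/125000);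
       (-901/1000, -217/500, 78329/125000, 125953/200000);
       (-231/250, 383/1000, 1204021/1000000, 1210041/1000000);
       (-609/1000, 793/1000, 290009/250000, 291459/250000);
       (-311/1000, 19/20, 192381/200000, 483357/500000);
       (-3/500, 1, 684079/1000000, 687499/1000000)]
      (399/1000) (917/1000) (99241/125000 + 35369/100000 * (kk - 2))); check_polygon.
  - intros kk Hk. apply (three_digits_disconnected v w Ai 1 (-3) kk Hbasis HAi _ _ _ HN
      [(199/500, 917/1000, 154191/500000, -51/125000);
       (901/1000, 217/500, 152549/1000000, -125953/200000);
       (231/250, -383/1000, 0, -1210041/1000000);
       (609/1000, -793/1000, 0, -291459/250000);
       (311/1000, -19/20, 0, -483357/500000);
       (3/500, -1, 0, -687499/1000000);
       (-199/500, -917/1000, 0, -355159/500000);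
       (-901/1000, -217/500, 0, -105197/62500);
       (-231/250, 383/1000, 0, -125691/62500);
       (-609/1000, 793/1000, 0, -1511477/1000000);
       (-311/1000, 19/20, 0, -119927/125000);
       (-3/500, 1, 175101/500000, -3563/10000)]
      (-399/1000) (-917/1000) (640281/1000000 + -35369/100000 * (kk + 2))); check_polygon.
Qed.

Theorem theorem3p3 (B : zmat) (p q k : Z) (v : vec) :
  expanding (zmat_R B) ->
  (* characteristic polynomial x^2 - p x + q *)
  mat_tr (zmat_R B) = IZR p -> mat_det (zmat_R B) = IZR q ->
  (0 < p)%Z -> (q = 3%Z \/ q = (-3)%Z) ->
  k <> 0%Z ->
  lin_indep2 v (mat_vec (zmat_R B) v) ->
  (connected2
     (self_affine_set (zmat_R B)
        [vzero; v; vscale (IZR k) (mat_vec (zmat_R B) v)])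
   <-> (k = 1%Z \/ k = (-1)%Z)).
Proof.
  intros Hexp Htr Hdet Hp Hq Hk Hindep.
  change (self_affine_set (zmat_R B) ?D) with (attractor (mat_inv (zmat_R B)) D).
  pose proof (basis_det_nonzero _ _ Hindep) as Hbasis.
  assert (HQ : IZR q <> 0) by (apply not_0_IZR; lia).
  pose proof (inverse_companion (zmat_R B) v _ _ Htr Hdet HQ) as HAi.
  revert k Hk. change (classification (mat_inv (zmat_R B)) v (mat_vec (zmat_R B) v)).
  destruct (expanding_trace_det _ p q Hexp Htr Hdet Hp Hq)
    as [[-> ->]|[[-> ->]|[[-> ->]|[-> ->]]]].
  - apply classification_p1_q3; auto.
  - apply classification_p2_q3; auto.
  - apply classification_p3_q3; auto.
  - apply classification_p1_qm3; auto.
Qed.
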